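(* There is a function $m:\mathbb{Z}_{>0}\to\mathbb{R}$ such that for every positive integer $n$ and every $n$-by-$n$ doubly nonnegative matrix $A$, the matrix $A^t$ is doubly nonnegative for all $t \geq m(n)$.
   Context: A real $n$-by-$n$ matrix is doubly nonnegative if it is symmetric, positive semidefinite, and entry-wise nonnegative. For a positive semidefinite matrix $A=\lambda_1x_1x_1^T+\cdots+\lambda_nx_nx_n^T$ (spectral decomposition with orthonormal eigenvectors $x_i$ and eigenvalues $\lambda_i\ge 0$) and real $t>0$, the power is defined by $A^t=\lambda_1^t x_1x_1^T+\cdots+\lambda_n^t x_nx_n^T$. *)

From HB Require Import structures.
From mathcomp Require Import all_boot all_order all_algebra.
From mathcomp Require Import reals exp.
Set Implicit Arguments. Unset Strict Implicit. Unset Printing Implicit Defensive.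
Import Order.TTheory GRing.Theory Num.Theory.
Local Open Scope ring_scope.

Section DNN.
Variables (R : realType) (n : nat).

Definition symmetric (A : 'M[R]_n) : Prop := A^T = A.
Definition psd (A : 'M[R]_n) : Prop :=
  forall x : 'cV[R]_n, 0 <= (x^T *m A *m x) 0 0.
Definition entrywise_nonneg (A : 'M[R]_n) : Prop := forall i j, 0 <= A i j.
Definition doubly_nonnegative (A : 'M[R]_n) : Prop :=
  [/\ symmetric A, psd A & entrywise_nonneg A].

Definition spectral_decomposition (A : 'M[R]_n) (U : 'M[R]_n) (lam : 'I_n -> R) :=
  [/\ U^T *m U = 1%:M, (forall i, 0 <= lam i) &
      A = \sum_(i < n) lam i *: (col i U *m (col i U)^T)].

(* B is A^t, computed from some spectral decomposition of A (the result does
   not depend on the choice of decomposition) *)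
Definition is_mpow (A : 'M[R]_n) (t : R) (B : 'M[R]_n) : Prop :=
  exists U lam, spectral_decomposition A U lam /\
    B = \sum_(i < n) (lam i `^ t) *: (col i U *m (col i U)^T).

End DNN.

(* Every entry of A^t, as a function of t > 0, is an exponential sum
   sum_l c_l e^{b_l t} with at most n terms, so it has fewer than n zeros unless
   it vanishes identically.  Integer powers of A are entrywise nonnegative, and
   A^(s+1) = A^s A, so if all entries of A^s are nonnegative then so are those
   of A^(s+1).  Hence if some entry of A^t is negative then, for each of the
   N + 1 points t - N, ..., t (N = n^3), some entry is negative there; by
   pigeonhole one entry is negative at n + 1 of these points, and it is
   nonnegative at the integers between them, giving n sign changes and hence
   n zeros: a contradiction once t > n^3. *)

From Pilot Require Import Defs.
From HB Require Import structures.
From mathcomp Require Import all_boot all_order all_algebra.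
From mathcomp Require Import ring.
From mathcomp Require Import boolp functions reals topology normedtype sequences.
From mathcomp Require Import derive realfun exp.
Set Implicit Arguments. Unset Strict Implicit. Unset Printing Implicit Defensive.
Import Order.TTheory numFieldNormedType.Exports GRing.Theory Num.Theory.
Local Open Scope ring_scope.

Lemma pigeonhole_fiber (T E : finType) (f : T -> E) m :
  (#|E| * m < #|T|)%N -> exists e, (m < #|[set x | f x == e]|)%N.
Proof.
move=> H; apply/existsP; apply: contraLR H; rewrite negb_exists => /forallP H.
rewrite -leqNgt -sum1_card (partition_big f predT) //= -sum_nat_const.
apply: leq_sum => e _; rewrite sum1_card.
by have := H e; rewrite -leqNgt cardsE.
Qed.

Section ExponentialSums.
Variable R : realType.
Implicit Types (s : seq (R * R)) (x : R).

Definition expsum s x : R := \sum_(p <- s) p.1 * expR (p.2 * x).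

Definition expsum_deriv s := [seq (p.1 * p.2, p.2) | p <- s].

Lemma expsum_cons0 b s : expsum ((0, b) :: s) = expsum s.
Proof. by apply/funext => x; rewrite /expsum big_cons mul0r add0r. Qed.

Lemma is_derive_expsum s x : is_derive x 1 (expsum s) (expsum (expsum_deriv s) x).
Proof.
elim: s => [|p s IH].
  have -> : expsum [::] = cst 0 by apply/funext => y; rewrite /expsum big_nil.
  exact: is_derive_cst.
have -> : expsum (p :: s) = (fun y => p.1 * expR (p.2 * y)) + expsum s.
  by apply/funext => y; rewrite /expsum big_cons.
rewrite /= {2}/expsum big_cons /=; apply: is_deriveD.
by apply: trigger_derive; rewrite /GRing.scale /= mulr1; ring.
Qed.

Lemma continuous_expsum s : continuous (expsum s).
Proof.
move=> x; apply/differentiable_continuous/derivable1_diffP.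
by case: (is_derive_expsum s x).
Qed.

Lemma expsum_cons_shift p s x : expsum (p :: s) x =
  expsum ((p.1, 0) :: [seq (q.1, q.2 - p.2) | q <- s]) x * expR (p.2 * x).
Proof.
rewrite /expsum !big_cons big_map /= mul0r expR0 mulr1 mulrDl mulr_suml.
congr (_ + _); apply: eq_bigr => q _ /=; rewrite -mulrA -expRD.
by congr (_ * expR _); ring.
Qed.

Lemma expsum_const s :
  (forall x, expsum (expsum_deriv s) x = 0) -> forall x y, expsum s x = expsum s y.
Proof.
move=> D0 x y; apply: is_derive_0_is_cst => z.
by rewrite -(D0 z); apply: is_derive_expsum.
Qed.

Lemma expsum_rolle s (z : nat -> R) m :
  (forall i, (i < m)%N -> z i < z i.+1) ->
  (forall i, (i <= m)%N -> expsum s (z i) = 0) ->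
  exists c : nat -> R, forall i, (i < m)%N ->
    z i < c i < z i.+1 /\ expsum (expsum_deriv s) (c i) = 0.
Proof.
move=> zinc z0.
suff /choice[c cP] : forall i, exists c, (i < m)%N ->
    z i < c < z i.+1 /\ expsum (expsum_deriv s) c = 0 by exists c.
move=> i.
have [im|] := ltnP i m; last by exists 0.
have derf y : derivable (expsum s) y 1 by case: (is_derive_expsum s y).
have [c cz Dc] := Rolle (zinc i im) (fun c _ => derf c)
  (continuous_subspaceT (@continuous_expsum s))
  (etrans (z0 i (ltnW im)) (esym (z0 i.+1 im))).
exists c => _; split; first by rewrite !(itvP cz).
have D0 : 'D_1 (expsum s) c = 0 by rewrite derive_val.
by clear Dc; have D := is_derive_expsum s c; rewrite -D0 derive_val.
Qed.

Lemma expsum_eq0 s (z : nat -> R) :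
  (forall i, (i.+1 < size s)%N -> z i < z i.+1) ->
  (forall i, (i < size s)%N -> expsum s (z i) = 0) -> forall x, expsum s x = 0.
Proof.
move Hn : (size s) => n; elim: n s z Hn => [|n IH] [|p s] z //=.
  by move=> _ _ _ x; rewrite /expsum big_nil.
case=> sn zinc z0 x.
(* Dividing by e^{p.2 x} makes the first term constant, so Rolle's theorem
   passes to a derivative with one term fewer. *)
set t := [seq (q.1, q.2 - p.2) | q <- s].
have g0 i : (i <= n)%N -> expsum ((p.1, 0) :: t) (z i) = 0.
  move=> /z0 /eqP; rewrite expsum_cons_shift mulf_eq0 (gt_eqF (expR_gt0 _)) orbF.
  by move/eqP.
have [c cP] := @expsum_rolle _ z n zinc g0.
have dt0 : forall y, expsum (expsum_deriv t) y = 0.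
  apply: (IH _ c); first by rewrite !size_map.
    move=> i hi; have [/andP[_ ci] _] := cP i (ltnW hi).
    by have [/andP[ci1 _] _] := cP i.+1 hi; apply: lt_trans ci ci1.
  by move=> i /cP[_]; rewrite /= mulr0 expsum_cons0.
have dg0 y : expsum (expsum_deriv ((p.1, 0) :: t)) y = 0.
  by rewrite /= mulr0 expsum_cons0 dt0.
by rewrite expsum_cons_shift (@expsum_const _ dg0 x (z 0%N)) g0 // mul0r.
Qed.

(* Each [a_i, b_i] contains a zero, and these size s + 1 zeros are distinct. *)
Lemma expsum_few_sign_changes s (a b : nat -> R) :
  (forall i, (i <= size s)%N -> a i < b i) ->
  (forall i, (i < size s)%N -> b i <= a i.+1) ->
  ~ (forall i, (i <= size s)%N -> expsum s (a i) < 0 <= expsum s (b i)).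
Proof.
move=> ab ba sgn.
have zP i : exists c, (i <= size s)%N -> a i < c <= b i /\ expsum s c = 0.
  have [hi|] := leqP i (size s); last by exists 0.
  have /andP[fa fb] := sgn i hi.
  have between : Num.min (expsum s (a i)) (expsum s (b i)) <= 0 <=
      Num.max (expsum s (a i)) (expsum s (b i)).
    by rewrite ge_min le_max (ltW fa) fb orbT.
  have [c cab fc] :=
    IVT (ltW (ab i hi)) (continuous_subspaceT (@continuous_expsum s)) between.
  exists c => _; split => //; rewrite (itvP cab) andbT lt_neqAle (itvP cab) andbT.
  by apply: contraTneq fa => ->; rewrite fc ltxx.
have [z zP'] := choice zP.
have f0 := @expsum_eq0 s z _ (fun i hi => (zP' i (ltnW hi)).2).
have /andP[] := sgn 0%N isT; rewrite f0 ?ltxx // => i hi.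
have [/andP[_ zb] _] := zP' i (ltnW (ltnW hi)).
have [/andP[az _] _] := zP' i.+1 (ltnW hi).
by apply: le_lt_trans zb (le_lt_trans (ba i (ltnW hi)) az).
Qed.

Lemma shift_nonneg_nat (E : Type) (f : E -> R -> R) :
  (forall y, 0 < y -> (forall e, 0 <= f e y) -> forall e, 0 <= f e (y + 1)) ->
  forall y, 0 < y -> (forall e, 0 <= f e y) -> forall (i : nat) e, 0 <= f e (y + i%:R).
Proof.
move=> fS y y0 fy; elim=> [|i IH] e; first by rewrite addr0.
rewrite -natr1 addrA; apply: fS IH _.
by apply: lt_le_trans y0 _; rewrite lerDl.
Qed.

Lemma expsum_family_nonneg (E : finType) (S : E -> seq (R * R)) n :
  (forall e, (size (S e) <= n)%N) ->
  (forall (m : nat) e, 0 <= expsum (S e) m.+1%:R) ->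
  (forall y, 0 < y -> (forall e, 0 <= expsum (S e) y) ->
     forall e, 0 <= expsum (S e) (y + 1)) ->
  forall t, (#|E| * n)%:R < t -> forall e, 0 <= expsum (S e) t.
Proof.
move=> Ssz fnat fS t ht e0; rewrite leNgt; apply/negP => ft.
set N := (#|E| * n)%N in ht; set t0 := t - N%:R.
have t0_gt0 : 0 < t0 by rewrite subr_gt0.
have neg (i : 'I_N.+1) : exists e, expsum (S e) (t0 + (val i)%:R) < 0.
  apply: contrapT => /forallNP fi.
  suff : 0 <= expsum (S e0) t by rewrite leNgt ft.
  have y_gt0 : 0 < t0 + (val i)%:R by rewrite ltr_wpDr.
  have tE : t0 + (val i)%:R + (N - val i)%:R = t.
    have iN : (val i <= N)%N := ltn_ord i.
    by rewrite natrB // /t0; ring.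
  rewrite -tE; apply: (@shift_nonneg_nat E (fun e => expsum (S e)) fS _ y_gt0) => e.
  by rewrite leNgt; apply/negP; exact: fi.
have [g gP] := choice neg.
have [e Fn] : exists e, (n < #|[set j | g j == e]|)%N.
  by apply: pigeonhole_fiber; rewrite card_ord.
set js := [seq val j | j <- enum [set j | g j == e]].
have js_size : size js = #|[set j | g j == e]| by rewrite size_map cardE.
have js_sorted : sorted ltn js.
  rewrite sorted_map /enum_mem; apply: sorted_filter; first exact: ltn_trans.
  by rewrite -enumT -sorted_map val_enum_ord iota_ltn_sorted.
have js_neg i : (i < size js)%N -> expsum (S e) (t0 + (nth 0%N js i)%:R) < 0.
  move=> hi; have /mapP[j] := mem_nth 0%N hi.
  by rewrite mem_enum inE => /eqP <- ->.
have /andP[k_le k_gt] := truncn_itv (ltW t0_gt0); set k := Num.truncn t0 in k_le k_gt.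
have js_long i : (i <= size (S e))%N -> (i < size js)%N.
  by move=> hi; rewrite js_size (leq_ltn_trans _ Fn) // (leq_trans hi).
apply: (@expsum_few_sign_changes (S e) (fun i => t0 + (nth 0%N js i)%:R)
  (fun i => (k + nth 0%N js i).+1%:R)).
- by move=> i _; rewrite -addSn natrD ltrD2r.
- move=> i hi; rewrite -addnS natrD lerD // ler_nat.
  by apply: (sorted_ltn_nth ltn_trans); rewrite ?inE ?js_long // ltnW.
- by move=> i hi; rewrite fnat andbT js_neg ?js_long.
Qed.

End ExponentialSums.

Lemma entrywise_nonneg_mul (R : realType) n (M N : 'M[R]_n) :
  entrywise_nonneg M -> entrywise_nonneg N -> entrywise_nonneg (M *m N).
Proof.
by move=> M0 N0 i j; rewrite mxE; apply: sumr_ge0 => k _; apply: mulr_ge0.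
Qed.

Section SpectralMatrices.
Variables (R : realType) (n : nat) (U : 'M[R]_n).
Implicit Types d e : 'I_n -> R.

Definition spectral_mx d : 'M[R]_n := U *m diag_mx (\row_i d i) *m U^T.

Lemma sum_outer_col_spectral_mx d :
  \sum_(i < n) d i *: (col i U *m (col i U)^T) = spectral_mx d.
Proof.
apply/matrixP => a b; rewrite summxE /spectral_mx mul_mx_diag !mxE.
by apply: eq_bigr => l _; rewrite !mxE big_ord1 !mxE; ring.
Qed.

Lemma spectral_mxE d a b : spectral_mx d a b = \sum_(l < n) d l * (U a l * U b l).
Proof.
rewrite /spectral_mx mul_mx_diag !mxE.
by apply: eq_bigr => l _; rewrite !mxE; ring.
Qed.

Lemma spectral_mx_sym d : Defs.symmetric (spectral_mx d).
Proof. by rewrite /Defs.symmetric /spectral_mx !trmx_mul trmxK tr_diag_mx mulmxA. Qed.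

Lemma spectral_mx_psd d : (forall i, 0 <= d i) -> psd (spectral_mx d).
Proof.
move=> d_ge0 x; rewrite /spectral_mx.
have -> : x^T *m (U *m diag_mx (\row_i d i) *m U^T) *m x =
    (U^T *m x)^T *m diag_mx (\row_i d i) *m (U^T *m x).
  by rewrite trmx_mul trmxK !mulmxA.
rewrite mul_mx_diag mxE; apply: sumr_ge0 => j _; rewrite !mxE.
by rewrite mulrAC -expr2 mulr_ge0 ?sqr_ge0.
Qed.

Lemma mul_spectral_mx d e : U^T *m U = 1%:M ->
  spectral_mx d *m spectral_mx e = spectral_mx (fun i => d i * e i).
Proof.
move=> UU; rewrite /spectral_mx !mulmxA -[U *m _ *m U^T *m U]mulmxA UU mulmx1.
rewrite -[U *m _ *m _]mulmxA mulmx_diag; congr (_ *m diag_mx _ *m _).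
by apply/matrixP => i j; rewrite !mxE.
Qed.

End SpectralMatrices.

Section SpectralPowers.
Variables (R : realType) (n : nat) (U : 'M[R]_n) (lam : 'I_n -> R).
Hypotheses (UU : U^T *m U = 1%:M) (lam_ge0 : forall i, 0 <= lam i).

Definition spectral_pow (t : R) := spectral_mx U (fun i => lam i `^ t).

(* Entry (a, b) of [spectral_pow t] for t > 0: the term of eigenvalue lam l > 0 is
   U a l U b l e^{t ln (lam l)}; zero eigenvalues contribute nothing. *)
Definition spectral_pow_expsum (a b : 'I_n) : seq (R * R) :=
  [seq (U a l * U b l, ln (lam l)) | l <- [seq l <- index_enum 'I_n | 0 < lam l]].

Lemma size_spectral_pow_expsum a b : (size (spectral_pow_expsum a b) <= n)%N.
Proof.
rewrite size_map deprecated_filter_index_enum -cardE.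
by rewrite (leq_trans (max_card _)) ?card_ord.
Qed.

Lemma spectral_pow_expsumE t a b :
  0 < t -> spectral_pow t a b = expsum (spectral_pow_expsum a b) t.
Proof.
move=> t_gt0; rewrite spectral_mxE /expsum big_map big_filter.
rewrite (bigID (fun l => 0 < lam l)) /= [X in _ + X]big1 ?addr0.
  by apply: eq_bigr => l l_gt0; rewrite /powR gt_eqF // mulrC [ln _ * t]mulrC.
move=> l; rewrite lt_def lam_ge0 andbT negbK => /eqP ->.
by rewrite powR0 ?mul0r // gt_eqF.
Qed.

Lemma spectral_pow1 : spectral_pow 1 = spectral_mx U lam.
Proof. by congr (spectral_mx _ _); apply/funext => i; rewrite powRr1. Qed.

Lemma spectral_powS t :
  0 < t -> spectral_pow (t + 1) = spectral_pow t *m spectral_pow 1.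
Proof.
move=> t_gt0; rewrite mul_spectral_mx //; congr (spectral_mx _ _).
by apply/funext => i; rewrite powRD // (gt_eqF (ltr_wpDl (ltW t_gt0) ltr01)).
Qed.

Lemma spectral_pow_nat_nonneg : entrywise_nonneg (spectral_pow 1) ->
  forall m : nat, entrywise_nonneg (spectral_pow m.+1%:R).
Proof.
move=> P1 m; elim: m => [//|m IH].
by rewrite -natr1 spectral_powS ?ltr0Sn //; apply: entrywise_nonneg_mul.
Qed.

Lemma spectral_pow_nonneg t : entrywise_nonneg (spectral_pow 1) ->
  (n * n * n)%N%:R < t -> entrywise_nonneg (spectral_pow t).
Proof.
move=> P1 t_gt i j; have t_gt0 : 0 < t by apply: le_lt_trans t_gt.
rewrite (spectral_pow_expsumE _ _ t_gt0).
pose S (e : 'I_n * 'I_n) := spectral_pow_expsum e.1 e.2.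
apply: (@expsum_family_nonneg _ _ S n _ _ _ _ _ (i, j)).
- by move=> e; apply: size_spectral_pow_expsum.
- by move=> m e; rewrite -spectral_pow_expsumE //; apply: spectral_pow_nat_nonneg.
- move=> y y_gt0 Py e; have y1_gt0 : 0 < y + 1 by rewrite addr_gt0.
  rewrite -(spectral_pow_expsumE _ _ y1_gt0) spectral_powS //.
  apply: entrywise_nonneg_mul => // a b.
  by rewrite (spectral_pow_expsumE _ _ y_gt0); apply: (Py (a, b)).
- by rewrite card_prod card_ord.
Qed.

End SpectralPowers.

Theorem theorem2p2 (R : realType) :
  exists m : nat -> R,
    forall (n : nat), (0 < n)%N ->
    forall A : 'M[R]_n, doubly_nonnegative A ->
    forall t : R, 0 < t -> m n <= t ->
    forall B : 'M[R]_n, is_mpow A t B -> doubly_nonnegative B.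
Proof.
exists (fun n => (n * n * n).+1%:R) => n _ A [_ _ A_nonneg] t _ t_ge B
  [U [lam [[UU lam_ge0 A_def] ->]]].
rewrite A_def sum_outer_col_spectral_mx -(spectral_pow1 U lam_ge0) in A_nonneg.
rewrite sum_outer_col_spectral_mx.
split; first exact: spectral_mx_sym.
  by apply: spectral_mx_psd => i; apply: powR_ge0.
apply: (spectral_pow_nonneg UU lam_ge0 A_nonneg).
by apply: lt_le_trans t_ge; rewrite ltr_nat.
Qed.
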